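(* Let $\Omega=\{1,\dots,m\}^{\mathbb{N}}$ with shift $\sigma$, let $\mathcal{M}$ be the set of Borel probabilities on $\Omega$ with the Monge–Kantorovich metric $d_{MK}$, and let $\mathfrak{T}:\mathcal{M}\to\mathcal{M}$ be the push-forward map $\mathfrak{T}(\mu)(E)=\mu(\sigma^{-1}(E))$. Given $\epsilon>0$, a probability $\tilde\mu_2\in\mathcal{M}$, and a $\sigma$-invariant probability $\tilde\mu_1\in\mathcal{M}$, there exist $\rho_1,\mu_2\in\mathcal{M}$ and an integer $N>0$ such that $d_{MK}(\rho_1,\tilde\mu_1)<\epsilon$, $d_{MK}(\mu_2,\tilde\mu_2)<\epsilon$, and $\mathfrak{T}^N(\rho_1)=\mu_2$.
   Context: $\Omega$ carries the metric $d_\Omega(\alpha,\beta)=0$ if $\alpha=\beta$ and $d_\Omega(\alpha,\beta)=2^{-k}$ where $k=\min\{i:\alpha_i\neq\beta_i\}$ otherwise. The Monge–Kantorovich metric on $\mathcal{M}$ is $d_{MK}(\mu,\nu)=\sup\{\int f\,d\mu-\int f\,d\nu : f:\Omega\to\mathbb{R}\ \text{1-Lipschitz}\}$. $\sigma(x_1,x_2,\dots)=(x_2,x_3,\dots)$. *)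

From HB Require Import structures.
From mathcomp Require Import all_boot all_order all_algebra.
From mathcomp Require Import all_classical all_reals all_analysis.
Set Implicit Arguments. Unset Strict Implicit. Unset Printing Implicit Defensive.
Import Order.TTheory GRing.Theory Num.Theory.
Import numFieldNormedType.Exports.
Local Open Scope classical_set_scope.
Local Open Scope ring_scope.

(* Omega = {0,...,m}^N : sequences over an alphabet of m.+1 symbols
   (so every alphabet size >= 1 is covered). Indices start at 0. *)
Definition Seq (m : nat) : Type := nat -> 'I_m.+1.
HB.instance Definition _ (m : nat) := gen_eqMixin (Seq m).
HB.instance Definition _ (m : nat) := gen_choiceMixin (Seq m).
HB.instance Definition _ (m : nat) := isPointed.Build (Seq m) (fun _ => ord0).


Definition lshift_seq (m : nat) (x : Seq m) : Seq m := fun n => x n.+1.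

Definition dOmega (R : realType) (m : nat) (a b : Seq m) : R :=
  match pselect (exists i, a i != b i) with
  | left h => (2^-1) ^+ (ex_minn h)
  | right _ => 0
  end.

Definition dopen (R : realType) (m : nat) (A : set (Seq m)) : Prop :=
  forall x, A x -> exists e : R, 0 < e /\ forall y, dOmega R x y < e -> A y.

Definition Omega (R : realType) (m : nat)
  : measurableType (sigma_display (@dopen R m)) :=
  g_sigma_algebraType (@dopen R m).

Definition Lip1 (R : realType) (m : nat) (f : Seq m -> R) : Prop :=
  forall x y, `|f x - f y| <= dOmega R x y.

Definition dMK (R : realType) (m : nat) (mu nu : probability (Omega R m) R)
  : \bar R :=
  ereal_sup [set ((\int[mu]_x (f x)%:E) - (\int[nu]_x (f x)%:E))%E
            | f in [set f | @Lip1 R m f]].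

Definition shift_invariant (R : realType) (m : nat)
  (mu : probability (Omega R m) R) : Prop :=
  forall E : set (Omega R m), measurable E ->
    mu ((@lshift_seq m) @^-1` E) = mu E.

From HB Require Import structures.
From mathcomp Require Import all_boot all_order all_algebra.
From mathcomp Require Import all_classical all_reals all_analysis.
From mathcomp Require Import lra measurable_realfun.
Import Order.TTheory GRing.Theory Num.Theory.
Local Open Scope classical_set_scope.
Local Open Scope ring_scope.
Set Implicit Arguments. Unset Strict Implicit. Unset Printing Implicit Defensive.

(** Draw (x, y) from mu1t (x) mu2t and let rho be the law of the sequence that
    copies the first N symbols of x and then continues with y.  Shifting it N
    times gives back y, so T^N rho = mu2t and one can take mu2 = mu2t.  A
    sample of rho agrees with its x on the first N symbols, hence lies within
    2^-N of x, so every 1-Lipschitz f has int f drho - int f dmu1t <= 2^-N,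
    i.e. d_MK(rho, mu1t) <= 2^-N. *)

Section dOmega.
Variables (R : realType) (m : nat).
Implicit Types (a b : Seq m) (k l : nat).

Definition agree k a b := forall i, (i < k)%N -> a i = b i.

Lemma halfX_gt0 k : 0 < (2^-1 : R) ^+ k.
Proof. by rewrite exprn_gt0 // invr_gt0. Qed.

Lemma halfX_le k l : (k <= l)%N -> (2^-1 : R) ^+ l <= (2^-1) ^+ k.
Proof. by apply: ler_wiXn2l; rewrite ?invr_ge0 // invf_le1 // ler1n. Qed.

Lemma halfX_lt (e : R) : 0 < e -> exists k, (2^-1) ^+ k < e.
Proof.
move=> e0; have [K _ /(_ K (leqnn K))] := near_infty_natSinv_expn_lt (PosNum e0).
by rewrite mul1r -exprVn; exists K.
Qed.

Lemma dOmega_le_agree k a b : agree k a b -> dOmega R a b <= (2^-1) ^+ k.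
Proof.
move=> ab; rewrite /dOmega; case: pselect => [h|_]; last exact/ltW/halfX_gt0.
case: ex_minnP => j abj _; apply: halfX_le; rewrite leqNgt; apply/negP => jk.
by rewrite ab ?eqxx in abj.
Qed.

Lemma agree_dOmega_lt k a b : dOmega R a b < (2^-1) ^+ k -> agree k.+1 a b.
Proof.
move=> abk i ik; apply/eqP/negPn/negP => abi; move: abk; rewrite /dOmega.
case: pselect => [h|]; last by case; exists i.
case: ex_minnP => j _ /(_ i abi) ji.
by rewrite ltNge halfX_le // (leq_trans ji).
Qed.

Lemma dOmega_le1 a b : dOmega R a b <= 1.
Proof. by rewrite -(expr0 (2^-1 : R)); apply: dOmega_le_agree. Qed.

End dOmega.

Section splice.
Variables (R : realType) (m N : nat).

Definition splice (p : Omega R m * Omega R m) : Omega R m :=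
  fun n => if (n < N)%N then p.1 n else p.2 (n - N)%N.

Lemma splice_agree p : agree N (splice p) p.1.
Proof. by move=> i iN; rewrite /splice iN. Qed.

Lemma eq_splice z z' y : agree N z z' -> splice (z, y) = splice (z', y).
Proof. by move=> zz'; apply: funext => n; rewrite /splice /=; case: ifP => // /zz'. Qed.

Lemma iter_lshift_seq n (z : Seq m) i : iter n (@lshift_seq m) z i = z (i + n)%N.
Proof. by elim: n i => [|n IHn] i /=; rewrite ?addn0 // /lshift_seq IHn addSnnS. Qed.

Lemma iter_lshift_splice p : iter N (@lshift_seq m) (splice p) = p.2.
Proof.
by apply: funext => i; rewrite iter_lshift_seq /splice ltnNge leq_addl addnK.
Qed.

Lemma dopen_agree (w : Seq m) : dopen R (agree N w).
Proof.
move=> z zw; exists ((2^-1) ^+ N); split; first exact: halfX_gt0.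
by move=> y /agree_dOmega_lt zy i iN; rewrite zw // zy // ltnW.
Qed.

Lemma dopen_splice_section (w : Seq m) (A : set (Omega R m)) :
  dopen R A -> dopen R [set y | A (splice (w, y))].
Proof.
move=> oA y Ay; have [e [e0 Ae]] := oA _ Ay; have [k ke] := halfX_lt e0.
exists ((2^-1) ^+ k); split; first exact: halfX_gt0.
move=> y' /agree_dOmega_lt yy'; apply: Ae; apply: le_lt_trans ke.
apply: dOmega_le_agree => i ik; rewrite /splice /=; case: ifP => // _.
by rewrite yy' // ltnS (leq_trans (leq_subr N i)) // ltnW.
Qed.

Definition tuple_seq (w : N.-tuple 'I_m.+1) : Seq m := nth ord0 w.

Lemma agree_tuple_seq (z : Seq m) : agree N (tuple_seq [tuple of mkseq z N]) z.
Proof. by move=> i iN; rewrite /tuple_seq nth_mkseq. Qed.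

Lemma splice_preimage (A : set (Omega R m)) : splice @^-1` A =
  \bigcup_(w in [set: N.-tuple 'I_m.+1])
     (agree N (tuple_seq w) `*` [set y | A (splice (tuple_seq w, y))]).
Proof.
apply/seteqP; split => [[z y] /= Azy|[z y] [w _ [/= zw Awy]]].
  exists [tuple of mkseq z N] => //; split => /=; first exact: agree_tuple_seq.
  by rewrite (eq_splice _ (agree_tuple_seq z)).
by rewrite /preimage /= -(eq_splice _ zw).
Qed.

Lemma measurable_splice : measurable_fun setT splice.
Proof.
apply: (@measurability _ _ _ (Omega R m) _ _ (@dopen R m)) => // _ [A oA <-].
rewrite setTI splice_preimage; apply: fin_bigcup_measurable => [|w _].
  exact: finite_finset.
apply: measurableX; apply: sub_sigma_algebra.
  exact: dopen_agree.
exact: dopen_splice_section.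
Qed.

End splice.

HB.instance Definition _ (R : realType) (m N : nat) :=
  isMeasurableFun.Build _ _ _ _ (@splice R m N) (@measurable_splice R m N).

Definition splice_law (R : realType) (m N : nat) (mu1 mu2 : probability (Omega R m) R)
  : probability (Omega R m) R :=
  distribution (mu1 \x mu2)%E (@splice R m N : {mfun _ >-> _}).

Section probability_integral.
Variables (R : realType) (d1 d2 : measure_display).
Variables (T1 : measurableType d1) (T2 : measurableType d2).
Variables (P1 : probability T1 R) (P2 : probability T2 R).

Lemma probability_integrable_bounded (g : T1 -> R) (M : R) :
  measurable_fun setT g -> (forall x, `|g x| <= M) -> P1.-integrable setT (EFin \o g).
Proof.
move=> mg gM; apply: measurable_bounded_integrable => //.
  by rewrite (le_lt_trans (probability_le1 P1 measurableT)) ?ltry.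
exists M; split; first exact: num_real.
by move=> M' MM' x _; apply: le_trans (gM x) (ltW MM').
Qed.

Lemma product_measure_fst A : measurable A -> (P1 \x P2)%E (fst @^-1` A) = P1 A.
Proof.
by move=> mA; rewrite -setXT product_measure1E // [X in (_ * X)%E]probability_setT mule1.
Qed.

Lemma integral_fst (f : T1 -> R) :
  measurable_fun setT f -> (P1 \x P2)%E.-integrable setT (EFin \o (f \o fst)) ->
  (\int[P1 \x P2]_z (f z.1)%:E = \int[P1]_x (f x)%:E)%E.
Proof.
move=> mf intf; transitivity (\int[pushforward (P1 \x P2)%E fst]_x (f x)%:E)%E.
  by rewrite integral_pushforward //; exact/measurable_EFinP.
by apply: eq_measure_integral => A mA _; exact: product_measure_fst.
Qed.

End probability_integral.

Section Lipschitz.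
Variables (R : realType) (m : nat) (f : Omega R m -> R).
Hypothesis Lf : Lip1 f.

Lemma Lip1_measurable : measurable_fun setT f.
Proof.
apply: measurability; first exact: (RGenOInfty.measurableE R).
move=> _ [_ [x ->] <-]; rewrite setTI; apply: sub_sigma_algebra.
move=> z /=; rewrite in_itv /= andbT => xfz.
exists (f z - x); split; first by rewrite subr_gt0.
move=> y zy; rewrite /= in_itv /= andbT.
have := Lf z y; have := ler_norm (f z - f y); lra.
Qed.

Lemma Lip1_bounded x : `|f x| <= `|f point| + 1.
Proof.
have := Lf x point; have := dOmega_le1 R x point.
have := ler_normB (f x - f point) (- f point); rewrite opprK subrK normrN; lra.
Qed.

Lemma Lip1_integrable d (T : measurableType d) (P : probability T R) (g : T -> Omega R m) :
  measurable_fun setT g -> P.-integrable setT (EFin \o (f \o g)).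
Proof.
move=> mg; apply: (@probability_integrable_bounded _ _ _ _ _ (`|f point| + 1)).
  exact: measurableT_comp Lip1_measurable mg.
by move=> t; apply: Lip1_bounded.
Qed.

End Lipschitz.

Section splice_law.
Variables (R : realType) (m : nat).
Local Open Scope ereal_scope.

Lemma dMK_self_le0 (mu : probability (Omega R m) R) : dMK mu mu <= 0.
Proof.
apply: ge_ereal_sup => _ [f _ <-].
by case: (\int[mu]_x _) => [r| |] /=; rewrite ?leNye // -EFinD subrr.
Qed.

Lemma dMK_splice_law_le (N : nat) (mu1 mu2 : probability (Omega R m) R) :
  dMK (splice_law N mu1 mu2) mu1 <= ((2^-1) ^+ N)%:E.
Proof.
apply: ge_ereal_sup => _ [f Lf <-].
have mf := Lip1_measurable Lf.
have int_splice := Lip1_integrable Lf (mu1 \x mu2) (@measurable_splice R m N).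
have int_fst := Lip1_integrable Lf (mu1 \x mu2) measurable_fst.
rewrite integral_pushforward //; last exact/measurable_EFinP.
rewrite preimage_setT -(integral_fst mf int_fst) -integralB //.
apply: le_trans (_ : \int[mu1 \x mu2]_z (cst ((2^-1) ^+ N)%:E z) <= _).
  apply: le_integral => //; first exact: integrableB.
    exact: (finite_measure_integrable_cst _ ((2^-1) ^+ N)%R measurableT).
  move=> [z y] _ /=; rewrite -EFinD lee_fin; apply: le_trans (ler_norm _) _.
  by apply: le_trans (Lf _ _) _; apply/dOmega_le_agree/splice_agree.
by rewrite integral_cst // [X in (_ * X)%E]probability_setT mule1.
Qed.

Lemma splice_law_iter_lshift (N : nat) (mu1 mu2 : probability (Omega R m) R)
  (E : set (Omega R m)) :
  measurable E -> splice_law N mu1 mu2 (iter N (@lshift_seq m) @^-1` E) = mu2 E.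
Proof.
move=> mE; rewrite /splice_law /distribution /pushforward /=.
rewrite (_ : _ @^-1` _ = setT `*` E); last first.
  apply/seteqP; split => -[z y]; rewrite /preimage /= iter_lshift_splice //.
  by case.
by rewrite product_measure1E // [X in (X * _)%E]probability_setT mul1e.
Qed.

End splice_law.

Theorem theorem2p8 (R : realType) (m : nat) (eps : R)
  (mu2t mu1t : probability (Omega R m) R) :
  0 < eps -> shift_invariant mu1t ->
  exists (rho1 mu2 : probability (Omega R m) R) (N : nat),
    (0 < N)%N /\
    (dMK rho1 mu1t < eps%:E)%E /\
    (dMK mu2 mu2t < eps%:E)%E /\
    (forall E : set (Omega R m), measurable E ->
       mu2 E = rho1 ((iter N (@lshift_seq m)) @^-1` E)).
Proof.
move=> eps0 _; have [N Neps] := halfX_lt eps0.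
exists (splice_law N.+1 mu1t mu2t), mu2t, N.+1; split => //; split.
  apply: le_lt_trans (dMK_splice_law_le _ _ _) _; rewrite lte_fin.
  exact: le_lt_trans (halfX_le _ (leqnSn N)) Neps.
split; first by apply: le_lt_trans (dMK_self_le0 _) _; rewrite lte_fin.
by move=> E mE; rewrite splice_law_iter_lshift.
Qed.
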